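(* Let $(f_n)_{n\in\mathbb N}$ be a sequence of contractions (i.e. $\mathrm{Lip}(f_n,d)<1$) on a complete metric space $(\mathbb X,d)$ converging uniformly to some function $f:\mathbb X\to\mathbb X$, i.e. $\sup_{x\in\mathbb X}d(f_n(x),f(x))\to0$. Then the set $\{x_n:n\in\mathbb N\}$, where $x_n$ is the fixed point of $f_n$, is bounded.
   Context: $\mathrm{Lip}(f,d)=\sup_{x\ne y}d(f(x),f(y))/d(x,y)$. *)

From Stdlib Require Export Reals.
Open Scope R_scope.

Definition is_metric {X : Type} (d : X -> X -> R) : Prop :=
  (forall x y, 0 <= d x y) /\
  (forall x y, d x y = 0 <-> x = y) /\
  (forall x y, d x y = d y x) /\
  (forall x y z, d x z <= d x y + d y z).

Definition cauchy_seq {X : Type} (d : X -> X -> R) (u : nat -> X) : Prop :=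
  forall eps, 0 < eps -> exists N, forall m n, (N <= m)%nat -> (N <= n)%nat ->
    d (u m) (u n) < eps.

Definition seq_converges {X : Type} (d : X -> X -> R) (u : nat -> X) (l : X) : Prop :=
  forall eps, 0 < eps -> exists N, forall n, (N <= n)%nat -> d (u n) l < eps.

Definition complete_metric {X : Type} (d : X -> X -> R) : Prop :=
  forall u, cauchy_seq d u -> exists l, seq_converges d u l.

(* Lip(g,d) < 1, i.e. sup_{x<>y} d(g x, g y)/d(x,y) < 1: there is a constant
   L < 1 bounding all the ratios. *)
Definition contraction {X : Type} (d : X -> X -> R) (g : X -> X) : Prop :=
  exists L, 0 <= L < 1 /\ forall x y, d (g x) (g y) <= L * d x y.

Definition unif_converges {X : Type} (d : X -> X -> R) (fs : nat -> X -> X) (f : X -> X) : Prop :=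
  forall eps, 0 < eps -> exists N, forall n, (N <= n)%nat -> forall x, d (fs n x) (f x) <= eps.

Definition bounded_family {X : Type} (d : X -> X -> R) (xs : nat -> X) : Prop :=
  exists M, forall n m, d (xs n) (xs m) <= M.

(* Fix N with sup_x d(f_n x, f x) <= 1 for n >= N. A contraction g of
   constant L with fixed point y satisfies d(x, y) <= d(x, g x) / (1 - L) for
   every x; for g = f_N and x = x_n (n >= N) we have
   d(x_n, f_N x_n) = d(f_n x_n, f_N x_n) <= 2, so the tail of the sequence
   stays within 2 / (1 - L) of x_N, and the finitely many earlier terms are
   bounded anyway. *)
From Stdlib Require Import Reals Lra Lia.
Open Scope R_scope.

Lemma bounded_family_of_dist_le {X : Type} (d : X -> X -> R)
  (hmet : is_metric d) (xs : nat -> X) (c : X) (M : R) :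
  (forall n, d (xs n) c <= M) -> bounded_family d xs.
Proof.
  destruct hmet as [_ [_ [hsym htri]]].
  intros hM. exists (2 * M). intros n m.
  apply (Rle_trans _ (d (xs n) c + d c (xs m))); [apply htri |].
  rewrite (hsym c (xs m)). generalize (hM n) (hM m). lra.
Qed.

Lemma ub_of_eventually_ub (g : nat -> R) (N : nat) (K : R) :
  (forall n, (N <= n)%nat -> g n <= K) -> exists M, forall n, g n <= M.
Proof.
  revert K. induction N as [|N IH]; intros K hK.
  - exists K. intros n. apply hK. lia.
  - apply (IH (Rmax K (g N))). intros n hn.
    destruct (Nat.eq_dec n N) as [-> | hne].
    + apply Rmax_r.
    + apply (Rle_trans _ K); [apply hK; lia | apply Rmax_l].
Qed.

Lemma contraction_dist_fixed_point_le {X : Type} (d : X -> X -> R)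
  (hmet : is_metric d) (g : X -> X) (L : R) (y x : X) :
  L < 1 -> (forall x y, d (g x) (g y) <= L * d x y) -> g y = y ->
  d x y <= d x (g x) / (1 - L).
Proof.
  destruct hmet as [_ [_ [_ htri]]].
  intros hL hLip hy.
  assert (hx : d x y <= d x (g x) + L * d x y).
  { apply (Rle_trans _ (d x (g x) + d (g x) (g y))).
    - rewrite hy. apply htri.
    - apply Rplus_le_compat_l, hLip. }
  apply (Rmult_le_reg_r (1 - L)); [lra |].
  unfold Rdiv. rewrite Rmult_assoc, Rinv_l by lra. lra.
Qed.

Lemma dist_le_of_unif_close {X : Type} (d : X -> X -> R) (hmet : is_metric d)
  (g h f : X -> X) (e : R) :
  (forall x, d (g x) (f x) <= e) -> (forall x, d (h x) (f x) <= e) ->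
  forall x, d (g x) (h x) <= 2 * e.
Proof.
  destruct hmet as [_ [_ [hsym htri]]].
  intros hg hh x.
  apply (Rle_trans _ (d (g x) (f x) + d (f x) (h x))); [apply htri |].
  rewrite (hsym (f x)). generalize (hg x) (hh x). lra.
Qed.

Theorem mainTheorem5 (X : Type) (d : X -> X -> R)
  (hmet : is_metric d) (hcomp : complete_metric d)
  (fs : nat -> X -> X) (f : X -> X)
  (hcontr : forall n, contraction d (fs n))
  (hunif : unif_converges d fs f)
  (xs : nat -> X) (hfix : forall n, fs n (xs n) = xs n) :
  bounded_family d xs.
Proof.
  destruct (hunif 1 Rlt_0_1) as [N hN].
  destruct (hcontr N) as [L [[_ hL] hLip]].
  assert (htail : forall n, (N <= n)%nat -> d (xs n) (xs N) <= 2 / (1 - L)).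
  { intros n hn.
    apply (Rle_trans _ (d (xs n) (fs N (xs n)) / (1 - L))).
    - exact (contraction_dist_fixed_point_le d hmet (fs N) L (xs N) (xs n)
               hL hLip (hfix N)).
    - apply Rmult_le_compat_r; [apply Rlt_le, Rinv_0_lt_compat; lra |].
      rewrite <- (hfix n) at 1. rewrite <- (Rmult_1_r 2).
      apply (dist_le_of_unif_close d hmet _ _ f); intro x; apply hN; lia. }
  destruct (ub_of_eventually_ub (fun n => d (xs n) (xs N)) N _ htail)
    as [M hM].
  exact (bounded_family_of_dist_le d hmet xs (xs N) M hM).
Qed.
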